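(* For every odd integer $n\ge 5$ there exists a square torus $T^2=\mathbb{R}^2/\{(2\pi\tilde k a,2\pi\tilde l a):\tilde k,\tilde l\in\mathbb{Z}\}$, for some $a>0$, with its flat metric, that admits a (full, isometric) proper-biharmonic immersion into the unit sphere $\mathbb{S}^n$ with constant mean curvature.
   Context: A map $\phi:(M,g)\to(N,\tilde g)$ between Riemannian manifolds is biharmonic if it is a critical point of the bienergy $E_2(\phi)=\frac12\int_M|\tau(\phi)|^2v_g$, equivalently if $\tau_2(\phi)=-\Delta\tau(\phi)-\operatorname{trace}R^N(d\phi,\tau(\phi))d\phi=0$, where $\tau(\phi)$ is the tension field; it is proper-biharmonic if biharmonic but not harmonic. Constant mean curvature (CMC) means $|H|$ is constant, $H$ the mean curvature vector field. Immersions are isometric and full, i.e. their image does not lie in any totally geodesic sphere $\mathbb{S}^{n'}\subset\mathbb{S}^n$ with $n'<n$. *)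

From Stdlib Require Import Reals List.
From Coquelicot Require Import Coquelicot.
Open Scope R_scope.

(* A map R^2 -> R^(n+1) is encoded componentwise: Phi k x y, k = 0..n.
   Vector fields along the map are encoded the same way. *)
Definition field := nat -> R -> R -> R.

(* Euclidean inner product on R^(n+1) (components 0..n; sum_f_R0 has n+1 terms). *)
Definition dot (n : nat) (u v : nat -> R) : R := sum_f_R0 (fun k => u k * v k) n.

Definition at_pt (V : field) (x y : R) : nat -> R := fun k => V k x y.

(* partial derivative: true = d/dx, false = d/dy *)
Definition pd (b : bool) (f : R -> R -> R) : R -> R -> R :=
  fun x y => if b then Derive (fun t => f t y) x else Derive (fun t => f x t) y.

Fixpoint Dl (l : list bool) (f : R -> R -> R) : R -> R -> R :=
  match l with nil => f | b :: l' => pd b (Dl l' f) end.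

Definition smooth2 (f : R -> R -> R) : Prop :=
  forall (l : list bool) (x y : R),
    ex_derive (fun t => Dl l f t y) x /\ ex_derive (fun t => Dl l f x t) y.

Definition dfield (b : bool) (V : field) : field := fun k => pd b (V k).

(* Levi-Civita connection of the pull-back bundle phi^{-1} T S^n, for phi
   with values in the unit sphere of R^(n+1): tangential projection of the
   ambient derivative. *)
Definition cov (n : nat) (Phi : field) (b : bool) (V : field) : field :=
  fun k x y =>
    pd b (V k) x y - dot n (at_pt (dfield b V) x y) (at_pt Phi x y) * Phi k x y.

(* tension field tau(phi) = trace nabla dphi; in the flat coordinates (x,y)
   of the torus, nabla_{e_i} e_i = 0. *)
Definition tension (n : nat) (Phi : field) : field :=
  fun k x y => cov n Phi true (dfield true Phi) k x y
             + cov n Phi false (dfield false Phi) k x y.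

Definition Rsph (n : nat) (X Y Z : nat -> R) : nat -> R :=
  fun k => dot n Y Z * X k - dot n X Z * Y k.

(* bitension tau_2 = -Delta tau - trace R(dphi, tau) dphi,
   with rough Laplacian Delta = - trace (nabla^2) (flat coordinates). *)
Definition bitension (n : nat) (Phi : field) : field :=
  let tau := tension n Phi in
  fun k x y =>
    cov n Phi true (cov n Phi true tau) k x y
  + cov n Phi false (cov n Phi false tau) k x y
  - (Rsph n (at_pt (dfield true Phi) x y) (at_pt tau x y)
            (at_pt (dfield true Phi) x y) k
     + Rsph n (at_pt (dfield false Phi) x y) (at_pt tau x y)
            (at_pt (dfield false Phi) x y) k).

Definition torus_periodic (n : nat) (a : R) (Phi : field) : Prop :=
  forall k x y, (k <= n)%nat ->
    Phi k (x + 2 * PI * a) y = Phi k x y /\ Phi k x (y + 2 * PI * a) = Phi k x y.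

Definition into_unit_sphere (n : nat) (Phi : field) : Prop :=
  forall x y, dot n (at_pt Phi x y) (at_pt Phi x y) = 1.

Definition isometric (n : nat) (Phi : field) : Prop :=
  forall x y,
    dot n (at_pt (dfield true Phi) x y) (at_pt (dfield true Phi) x y) = 1 /\
    dot n (at_pt (dfield false Phi) x y) (at_pt (dfield false Phi) x y) = 1 /\
    dot n (at_pt (dfield true Phi) x y) (at_pt (dfield false Phi) x y) = 0.

(* full: the image lies in no totally geodesic S^{n'} (n' < n), i.e. in no
   linear hyperplane of R^(n+1) *)
Definition full (n : nat) (Phi : field) : Prop :=
  forall c : nat -> R,
    (forall x y, dot n c (at_pt Phi x y) = 0) -> forall k, (k <= n)%nat -> c k = 0.

Definition biharmonic (n : nat) (Phi : field) : Prop :=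
  forall k x y, (k <= n)%nat -> bitension n Phi k x y = 0.

Definition harmonic (n : nat) (Phi : field) : Prop :=
  forall k x y, (k <= n)%nat -> tension n Phi k x y = 0.

(* mean curvature vector H = tau / m with m = 2; CMC: |H| constant *)
Definition mean_curv_norm (n : nat) (Phi : field) (x y : R) : R :=
  sqrt (dot n (at_pt (tension n Phi) x y) (at_pt (tension n Phi) x y)) / 2.

Definition cmc (n : nat) (Phi : field) : Prop :=
  exists c : R, forall x y, mean_curv_norm n Phi x y = c.

(* The immersion is a finite sum of circles: its components 2j and 2j+1 are
   A_j cos θ_j and A_j sin θ_j with θ_j = (P_j x + Q_j y) / a and (P_j, Q_j)
   integral, so it descends to the torus of side 2πa.  Derivatives only rescale
   amplitudes and shift phases by π/2, so every condition reduces to identities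
   between the numbers A_j^2 and the frequencies.  Writing λ_j = (P_j^2 + Q_j^2) / a^2,
   the sphere and isometry conditions give Σ A_j^2 = 1 and Σ λ_j A_j^2 = 2, the
   tension field is Σ_j (2 - λ_j) Φ_j (Φ_j the j-th circle), and the bitension field is
   Σ ((2 - λ_j)^2 + c) Φ_j with c = Σ (2 - λ_j) λ_j A_j^2.  If (2 - λ_j)^2 = μ for
   all j then c = 2 Σ (2 - λ_j) A_j^2 - μ = -μ, so the map is biharmonic, and |τ|
   is constant.  We use λ_j ∈ {4/5, 16/5}: the lattice points (2R, 0), (0, 2R),
   and pairs (X, Y), (-Y, X) on the circle of radius R (plus (0, R) if their
   number is odd), with a = √5 R / 2.  Fullness: restricted to a line close to
   the y-axis, distinct modes have distinct positive frequencies, and the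
   functions cos (w t), sin (w t) with distinct w^2 are linearly independent. *)

From Stdlib Require Import Reals Arith.
From Coquelicot Require Import Coquelicot.
From Stdlib Require Import Lra Lia Psatz ZArith List FinFun FunctionalExtensionality.
Open Scope R_scope.
Import ListNotations.

Definition lsum {T} (g : T -> R) (l : list T) : R :=
  fold_right (fun m acc => g m + acc) 0 l.

Lemma lsum_cons {T} (g : T -> R) m l : lsum g (m :: l) = g m + lsum g l.
Proof. reflexivity. Qed.

Lemma lsum_ext {T} (g h : T -> R) l :
  (forall m, In m l -> g m = h m) -> lsum g l = lsum h l.
Proof.
  induction l as [|m l IH]; intros E; simpl; auto.
  rewrite E, IH; [reflexivity | intros; apply E | ]; simpl; auto.
Qed.

Lemma lsum_plus {T} (g h : T -> R) l :
  lsum (fun m => g m + h m) l = lsum g l + lsum h l.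
Proof. induction l; simpl; [ring | rewrite IHl; ring]. Qed.

Lemma lsum_scal {T} c (g : T -> R) l : lsum (fun m => c * g m) l = c * lsum g l.
Proof. induction l; simpl; [ring | rewrite IHl; ring]. Qed.

Lemma lsum_const {T} c (l : list T) : lsum (fun _ => c) l = INR (length l) * c.
Proof. induction l; simpl length; [simpl; ring | rewrite S_INR; simpl; rewrite IHl; ring]. Qed.

Lemma lsum_app {T} (g : T -> R) l1 l2 : lsum g (l1 ++ l2) = lsum g l1 + lsum g l2.
Proof. induction l1; simpl; [ring | rewrite IHl1; ring]. Qed.

Lemma lsum_map {T U} (f : T -> U) g l : lsum g (map f l) = lsum (fun x => g (f x)) l.
Proof. induction l; simpl; [ring | rewrite IHl; ring]. Qed.

Lemma sum_f_R0_nth {T} (g : T -> R) l d L :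
  length l = S L -> sum_f_R0 (fun j => g (nth j l d)) L = lsum g l.
Proof.
  revert L; induction l as [|m l IH]; intros L HL; [discriminate|].
  simpl in HL. destruct L as [|L].
  - destruct l; [simpl; ring | discriminate].
  - rewrite decomp_sum, IH by lia. reflexivity.
Qed.

Lemma sum_f_R0_pairs f L :
  sum_f_R0 f (2 * L + 1) = sum_f_R0 (fun j => f (2 * j)%nat + f (2 * j + 1)%nat) L.
Proof.
  induction L as [|L IH]; [simpl; ring|].
  replace (2 * S L + 1)%nat with (S (S (2 * L + 1))) by lia.
  rewrite 2!tech5, IH, (tech5 _ L).
  replace (S (2 * L + 1)) with (2 * S L)%nat by lia.
  replace (S (2 * S L)) with (2 * S L + 1)%nat by lia. ring.
Qed.

Lemma cos_plus_PI2 v : cos (v + PI / 2) = - sin v.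
Proof. rewrite cos_plus, cos_PI2, sin_PI2; ring. Qed.

Lemma cos_minus_PI2 v : cos (v - PI / 2) = sin v.
Proof. rewrite cos_minus, cos_PI2, sin_PI2; ring. Qed.

Definition Zint (x : R) : Prop := exists z : Z, x = IZR z.

Lemma Zint_plus x y : Zint x -> Zint y -> Zint (x + y).
Proof. intros [p ->] [q ->]. exists (p + q)%Z. now rewrite plus_IZR. Qed.

Lemma Zint_mult x y : Zint x -> Zint y -> Zint (x * y).
Proof. intros [p ->] [q ->]. exists (p * q)%Z. now rewrite mult_IZR. Qed.

Lemma Zint_INR k : Zint (INR k).
Proof. exists (Z.of_nat k). apply INR_IZR_INZ. Qed.

Lemma Zint_opp x : Zint x -> Zint (- x).
Proof. intros [p ->]. exists (- p)%Z. now rewrite opp_IZR. Qed.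

Lemma Zint_minus x y : Zint x -> Zint y -> Zint (x - y).
Proof. intros [p ->] [q ->]. exists (p - q)%Z. now rewrite minus_IZR. Qed.

Lemma Zint_ge1 x : Zint x -> 0 < x -> 1 <= x.
Proof.
  intros [z ->] H. apply lt_IZR in H. apply IZR_le. lia.
Qed.

Lemma Zint_frac_eq0 z q N : Zint z -> Rabs q < N -> z + q / N = 0 -> z = 0 /\ q = 0.
Proof.
  intros [k ->] Hq E. pose proof (Rabs_pos q).
  assert (Hk : Rabs (IZR k) < 1).
  { assert (Ek : IZR k = - q / N) by (unfold Rdiv in *; lra).
    rewrite Ek. unfold Rdiv. rewrite Rabs_mult, Rabs_Ropp, Rabs_inv, (Rabs_right N) by lra.
    apply (Rmult_lt_reg_r N); [lra|]. rewrite Rmult_assoc, Rinv_l by lra. lra. }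
  apply Rabs_def2 in Hk as [Hk1 Hk2].
  assert (k < 1)%Z by (apply lt_IZR; simpl; lra).
  assert (-1 < k)%Z by (apply lt_IZR; simpl; lra).
  replace k with 0%Z in * by lia.
  split; [reflexivity|]. rewrite Rplus_0_l in E.
  apply Rmult_integral in E as [E | E]; [exact E | exfalso; revert E; apply Rinv_neq_0_compat; lra].
Qed.

Lemma cos_period_Zint v p : Zint p -> cos (v + 2 * PI * p) = cos v.
Proof.
  intros [z ->]. destruct (Z.abs_spec z) as [[_ E] | [_ E]].
  - rewrite <- (Z.abs_eq z) by lia. rewrite <- (Z2Nat.id (Z.abs z)) by lia.
    rewrite <- INR_IZR_INZ, <- (cos_period v (Z.to_nat (Z.abs z))). f_equal; ring.
  - replace z with (- Z.of_nat (Z.to_nat (Z.abs z)))%Z by lia.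
    rewrite opp_IZR, <- INR_IZR_INZ.
    rewrite <- (cos_period (v + 2 * PI * - INR (Z.to_nat (Z.abs z))) (Z.to_nat (Z.abs z))).
    f_equal; ring.
Qed.

(** * Linear independence of [cos (w t)], [sin (w t)] *)

Definition trig_sum (N : nat) (c s w : nat -> R) (t : R) : R :=
  sum_f_R0 (fun j => c j * cos (w j * t) + s j * sin (w j * t)) N.

Lemma is_derive_trig_sum N c s w t :
  is_derive (trig_sum N c s w) t
    (trig_sum N (fun j => s j * w j) (fun j => - (c j * w j)) w t).
Proof.
  induction N as [|N IH]; unfold trig_sum in *; simpl.
  - auto_derive; auto; ring.
  - apply (is_derive_plus _ _ t _ _ IH). auto_derive; auto; ring.
Qed.

Lemma trig_sum_deriv_eq0 N c s w :
  (forall t, trig_sum N c s w t = 0) ->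
  forall t, trig_sum N (fun j => s j * w j) (fun j => - (c j * w j)) w t = 0.
Proof.
  intros H t. rewrite <- (is_derive_unique _ _ _ (is_derive_trig_sum N c s w t)).
  rewrite (functional_extensionality _ (fun _ => 0) H). apply Derive_const.
Qed.

Lemma cos_sin_comb_eq0 c s w :
  w <> 0 -> (forall t, c * cos (w * t) + s * sin (w * t) = 0) -> c = 0 /\ s = 0.
Proof.
  intros Hw H. pose proof (H 0) as H0. pose proof (H (PI / 2 / w)) as H1.
  rewrite Rmult_0_r, cos_0, sin_0 in H0.
  replace (w * (PI / 2 / w)) with (PI / 2) in H1 by (field; exact Hw).
  rewrite cos_PI2, sin_PI2 in H1. lra.
Qed.

(* Induction on the number of terms: [f'' + w_N^2 f] kills the last term and
   multiplies the others by [w_N^2 - w_j^2 <> 0]. *)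
Lemma trig_sum_coeffs_eq0 N : forall c s w,
  (forall j, (j <= N)%nat -> w j <> 0) ->
  (forall i j, (i <= N)%nat -> (j <= N)%nat -> i <> j -> w i ^ 2 <> w j ^ 2) ->
  (forall t, trig_sum N c s w t = 0) ->
  forall j, (j <= N)%nat -> c j = 0 /\ s j = 0.
Proof.
  induction N as [|N IH]; intros c s w Hw Hsq H j Hj.
  - replace j with 0%nat by lia. apply (cos_sin_comb_eq0 _ _ (w 0%nat)); [apply Hw; lia|].
    intros t. rewrite <- (H t). unfold trig_sum. simpl. ring.
  - set (v := w (S N)).
    assert (Hlow : forall t, trig_sum N (fun j => (v ^ 2 - w j ^ 2) * c j)
                                        (fun j => (v ^ 2 - w j ^ 2) * s j) w t = 0).
    { intros t.
      pose proof (trig_sum_deriv_eq0 _ _ _ _ (trig_sum_deriv_eq0 _ _ _ _ H) t) as H2.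
      rewrite <- (Rplus_0_r 0), <- H2 at 1. rewrite <- (Rmult_0_r (v ^ 2)), <- (H t).
      unfold trig_sum. rewrite scal_sum, <- plus_sum, tech5.
      match goal with |- _ = _ + ?last => replace last with 0 by (unfold v; ring) end.
      rewrite Rplus_0_r. apply sum_eq. intros; ring. }
    assert (Hc : forall i, (i <= N)%nat -> c i = 0 /\ s i = 0).
    { intros i Hi.
      assert (Hvi : v ^ 2 - w i ^ 2 <> 0)
        by (intros E; apply (Hsq (S N) i); [lia | lia | lia | unfold v in E; lra]).
      destruct (IH _ _ w ltac:(intros; apply Hw; lia) ltac:(intros; apply Hsq; lia) Hlow i Hi)
        as [Hci Hsi].
      split; [apply (Rmult_eq_reg_l _ _ _ (eq_trans Hci (eq_sym (Rmult_0_r _))) Hvi)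
             |apply (Rmult_eq_reg_l _ _ _ (eq_trans Hsi (eq_sym (Rmult_0_r _))) Hvi)]. }
    destruct (Nat.eq_dec j (S N)) as [-> | Hne]; [| apply Hc; lia].
    apply (cos_sin_comb_eq0 _ _ v); [apply Hw; lia|]. intros t.
    rewrite <- (H t). unfold trig_sum. rewrite tech5.
    rewrite (sum_eq _ (fun _ => 0)) by (intros i Hi; destruct (Hc i Hi) as [-> ->]; ring).
    rewrite sum_cte. unfold v; ring.
Qed.

(** * Sums of circles *)

Record mode := Mode { amp : R; px : R; py : R }.

Definition mode0 : mode := Mode 0 0 0.

Definition lattice_pt (m : mode) : R * R := (px m, py m).

(* [a] times the frequency of the mode along the line [t ↦ (tau t, t)]. *)
Definition slope_freq (tau : R) (m : mode) : R := tau * px m + py m.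

Lemma slope_freq_pos B m :
  Zint (py m) -> Rabs (px m) <= B -> 0 <= py m -> (py m = 0 -> 0 < px m) ->
  0 < slope_freq (/ (2 * B + 1)) m.
Proof.
  intros Hint HB Hy Hy0. pose proof (Rabs_pos (px m)). unfold slope_freq.
  assert (Htau : Rabs (/ (2 * B + 1) * px m) < 1).
  { rewrite Rabs_mult, Rabs_inv, Rabs_right by lra.
    apply (Rmult_lt_reg_l (2 * B + 1)); [lra|]. rewrite <- Rmult_assoc, Rinv_r; lra. }
  apply Rabs_def2 in Htau.
  destruct (Req_dec (py m) 0) as [E | E].
  - rewrite E, Rplus_0_r. apply Rmult_lt_0_compat; [apply Rinv_0_lt_compat; lra | auto].
  - pose proof (Zint_ge1 _ Hint ltac:(lra)). lra.
Qed.

Lemma slope_freq_inj B m m' :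
  Zint (py m) -> Zint (py m') -> Rabs (px m) <= B -> Rabs (px m') <= B ->
  slope_freq (/ (2 * B + 1)) m = slope_freq (/ (2 * B + 1)) m' ->
  px m = px m' /\ py m = py m'.
Proof.
  intros Hy Hy' HB HB' E. unfold slope_freq in E.
  assert (Hd : Rabs (px m - px m') < 2 * B + 1).
  { pose proof (Rabs_triang (px m) (- px m')). rewrite Rabs_Ropp in *. unfold Rminus. lra. }
  destruct (Zint_frac_eq0 (py m - py m') (px m - px m') (2 * B + 1) (Zint_minus _ _ Hy Hy') Hd)
    as [E1 E2].
  - unfold Rdiv; lra.
  - split; lra.
Qed.

Section Circles.

Variable a : R.

Definition lat (b : bool) (m : mode) : R := if b then px m else py m.
Definition freq (b : bool) (m : mode) : R := lat b m / a.
Definition lam (m : mode) : R := freq true m ^ 2 + freq false m ^ 2.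

Lemma lam_lat m : a <> 0 -> lam m = (px m ^ 2 + py m ^ 2) / a ^ 2.
Proof. intros Ha. unfold lam, freq, lat. field. exact Ha. Qed.

Variable l : list mode.

Lemma lsum_freq_mul b b' :
  a <> 0 ->
  lsum (fun m => freq b m * freq b' m * amp m ^ 2) l
  = / a ^ 2 * lsum (fun m => lat b m * lat b' m * amp m ^ 2) l.
Proof.
  intros Ha. rewrite <- lsum_scal. apply lsum_ext. intros m _. unfold freq. field. exact Ha.
Qed.

Lemma lsum_lam_amp :
  lsum (fun m => lam m * amp m ^ 2) l =
  lsum (fun m => freq true m * freq true m * amp m ^ 2) l
  + lsum (fun m => freq false m * freq false m * amp m ^ 2) l.
Proof. rewrite <- lsum_plus. apply lsum_ext. intros m _. unfold lam. ring. Qed.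

Definition mode_at (k : nat) : mode := nth (Nat.div2 k) l mode0.

(* Component [2j] is [w m * amp m * cos (θ + s)] and component [2j+1] is
   [w m * amp m * sin (θ + s)], where [m] is the [j]-th mode; writing sin as a
   shifted cos makes each partial derivative a phase shift by [PI / 2]. *)
Definition circle_field (w : mode -> R) (s : R) : field :=
  fun k x y =>
    w (mode_at k) * amp (mode_at k) *
    cos (freq true (mode_at k) * x + freq false (mode_at k) * y + s
         - if Nat.odd k then PI / 2 else 0).

Definition circles : field := circle_field (fun _ => 1) 0.

Lemma circle_field_ext w w' s s' :
  (forall m, w m = w' m) -> s = s' -> circle_field w s = circle_field w' s'.
Proof. intros E ->. now rewrite (functional_extensionality _ _ E). Qed.

Lemma pd_circle_field b w s k :
  pd b (circle_field w s k) = circle_field (fun m => w m * freq b m) (s + PI / 2) k.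
Proof.
  extensionality x; extensionality y; unfold pd, circle_field.
  set (c := if Nat.odd k then _ else _).
  destruct b; apply is_derive_unique; auto_derive; auto;
    match goal with |- _ * (_ * - sin ?v) = _ * cos ?u =>
      replace u with (v + PI / 2) by ring end;
    rewrite cos_plus_PI2; ring.
Qed.

Lemma dfield_circle_field b w s :
  dfield b (circle_field w s) = circle_field (fun m => w m * freq b m) (s + PI / 2).
Proof. extensionality k. apply pd_circle_field. Qed.

Lemma dfield_circles b : dfield b circles = circle_field (freq b) (PI / 2).
Proof.
  unfold circles. rewrite dfield_circle_field.
  apply circle_field_ext; intros; ring.
Qed.

Lemma circle_field_PI w : circle_field w PI = circle_field (fun m => - w m) 0.
Proof.
  extensionality k; extensionality x; extensionality y; unfold circle_field.
  match goal with |- _ * cos ?u = _ * cos ?v => replace u with (v + PI) by ring end.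
  rewrite neg_cos; ring.
Qed.

Lemma Dl_circle_field L w s k :
  exists w' s', Dl L (circle_field w s k) = circle_field w' s' k.
Proof.
  induction L as [|b L (w' & s' & IH)]; [now exists w, s|].
  simpl; rewrite IH, pd_circle_field. eauto.
Qed.

Lemma smooth2_circle_field w s k : smooth2 (circle_field w s k).
Proof.
  intros L x y. destruct (Dl_circle_field L w s k) as (w' & s' & ->).
  unfold circle_field; split; auto_derive; auto.
Qed.

Variable n : nat.
Hypothesis dim : S n = (2 * length l)%nat.

Lemma mode_at_In k : (k <= n)%nat -> In (mode_at k) l.
Proof.
  intros Hk. apply nth_In. pose proof (Nat.div2_odd k).
  destruct (Nat.odd k); simpl in *; lia.
Qed.

Lemma dot_circle_field w w' s s' x y :
  dot n (at_pt (circle_field w s) x y) (at_pt (circle_field w' s') x y)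
  = cos (s - s') * lsum (fun m => w m * w' m * amp m ^ 2) l.
Proof.
  destruct l as [|m0 l'] eqn:El; [discriminate|].
  replace n with (2 * length l' + 1)%nat by (simpl in dim; lia).
  unfold dot. rewrite sum_f_R0_pairs, <- El.
  rewrite <- (sum_f_R0_nth _ l mode0 (length l')) by (rewrite El; reflexivity).
  rewrite scal_sum. apply sum_eq. intros j _.
  unfold at_pt, circle_field, mode_at.
  rewrite Nat.div2_double, Nat.div2_odd', Nat.odd_even, Nat.odd_odd, !cos_minus_PI2,
    !Rminus_0_r.
  set (th := _ * x + _ * y).
  replace (s - s') with ((th + s) - (th + s')) by ring.
  rewrite cos_minus. ring.
Qed.

Lemma cov_circle_field b w s k x y :
  cov n circles b (circle_field w s) k x y =
  circle_field (fun m => w m * freq b m) (s + PI / 2) k x y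
  - cos (s + PI / 2) * lsum (fun m => w m * freq b m * amp m ^ 2) l * circles k x y.
Proof.
  unfold cov. rewrite pd_circle_field, dfield_circle_field. unfold circles at 1.
  rewrite dot_circle_field, Rminus_0_r.
  rewrite (lsum_ext _ (fun m => w m * freq b m * amp m ^ 2)) by (intros; ring).
  reflexivity.
Qed.

Lemma cov_circle_field0 b w :
  cov n circles b (circle_field w 0) = circle_field (fun m => w m * freq b m) (PI / 2).
Proof.
  extensionality k; extensionality x; extensionality y.
  rewrite cov_circle_field, Rplus_0_l, cos_PI2. ring.
Qed.

Lemma into_unit_sphere_circles :
  lsum (fun m => amp m ^ 2) l = 1 -> into_unit_sphere n circles.
Proof.
  intros Hsph x y. unfold circles. rewrite dot_circle_field, Rminus_0_r, cos_0.
  rewrite (lsum_ext _ (fun m => amp m ^ 2)) by (intros; ring). rewrite Hsph; ring.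
Qed.

Lemma isometric_circles :
  lsum (fun m => freq true m * freq true m * amp m ^ 2) l = 1 ->
  lsum (fun m => freq false m * freq false m * amp m ^ 2) l = 1 ->
  lsum (fun m => freq true m * freq false m * amp m ^ 2) l = 0 ->
  isometric n circles.
Proof.
  intros Hxx Hyy Hxy x y.
  rewrite !dfield_circles, !dot_circle_field, Rminus_diag, cos_0, Hxx, Hyy, Hxy.
  repeat split; ring.
Qed.

Lemma torus_periodic_circles :
  a <> 0 -> (forall m, In m l -> Zint (px m) /\ Zint (py m)) -> torus_periodic n a circles.
Proof.
  intros Ha Hint k x y Hk. destruct (Hint _ (mode_at_In k Hk)) as [Hx Hy].
  unfold circles, circle_field, freq, lat.
  split.
  - match goal with |- _ * cos _ = _ * cos ?v => rewrite <- (cos_period_Zint v _ Hx) end.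
    do 2 f_equal. field. exact Ha.
  - match goal with |- _ * cos _ = _ * cos ?v => rewrite <- (cos_period_Zint v _ Hy) end.
    do 2 f_equal. field. exact Ha.
Qed.

Lemma dot_circles_on_line c tau t :
  a <> 0 ->
  dot n c (at_pt circles (tau * t) t) =
  trig_sum (Nat.pred (length l))
    (fun j => c (2 * j)%nat * amp (nth j l mode0))
    (fun j => c (2 * j + 1)%nat * amp (nth j l mode0))
    (fun j => slope_freq tau (nth j l mode0) / a) t.
Proof.
  intros Ha. replace n with (2 * Nat.pred (length l) + 1)%nat by lia.
  unfold dot. rewrite sum_f_R0_pairs. apply sum_eq. intros j _.
  unfold at_pt, circles, circle_field, mode_at, freq, lat, slope_freq.
  rewrite Nat.div2_double, Nat.div2_odd', Nat.odd_even, Nat.odd_odd, cos_minus_PI2,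
    !Rminus_0_r, !Rplus_0_r.
  replace ((tau * px (nth j l mode0) + py (nth j l mode0)) / a * t)
    with (px (nth j l mode0) / a * (tau * t) + py (nth j l mode0) / a * t) by (field; exact Ha).
  ring.
Qed.

Lemma full_circles tau :
  0 < a ->
  (forall m, In m l -> amp m <> 0) ->
  (forall m, In m l -> 0 < slope_freq tau m) ->
  NoDup (map (slope_freq tau) l) ->
  full n circles.
Proof.
  intros Ha Hamp Hpos Hnd c Hc.
  set (L := Nat.pred (length l)).
  assert (HL : (S L = length l)%nat) by (unfold L; lia).
  assert (Hin : forall j, (j <= L)%nat -> In (nth j l mode0) l) by (intros; apply nth_In; lia).
  assert (Hw : forall j, (j <= L)%nat -> 0 < slope_freq tau (nth j l mode0) / a)
    by (intros; apply Rdiv_lt_0_compat; auto).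
  assert (Hinj : forall i j, (i <= L)%nat -> (j <= L)%nat ->
            slope_freq tau (nth i l mode0) = slope_freq tau (nth j l mode0) -> i = j).
  { intros i j Hi Hj E. apply (proj1 (NoDup_nth _ (slope_freq tau mode0)) Hnd);
      [rewrite length_map; lia | rewrite length_map; lia | rewrite !map_nth; exact E]. }
  set (w := fun j => slope_freq tau (nth j l mode0) / a).
  assert (Hsq : forall i j, (i <= L)%nat -> (j <= L)%nat -> i <> j -> w i ^ 2 <> w j ^ 2).
  { intros i j Hi Hj Hij E. apply Hij, Hinj; auto.
    pose proof (Hw i Hi); pose proof (Hw j Hj). unfold w in *.
    apply (Rmult_eq_reg_r (/ a)); [nra | apply Rinv_neq_0_compat; lra]. }
  pose proof (trig_sum_coeffs_eq0 L _ _ w ltac:(intros j Hj; specialize (Hw j Hj); unfold w; lra)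
    Hsq (fun t => eq_trans (eq_sym (dot_circles_on_line c tau t ltac:(lra))) (Hc _ _))) as Hzero.
  intros k Hk. set (j := Nat.div2 k).
  assert (Hj : (j <= L)%nat) by (pose proof (Nat.div2_odd k); unfold j; lia).
  destruct (Hzero j Hj) as [Hev Hodd]. pose proof (Hamp _ (Hin j Hj)) as HA.
  rewrite (Nat.div2_odd k). fold j. destruct (Nat.odd k); simpl Nat.b2n.
  - apply Rmult_integral in Hodd as [? | ?]; [assumption | contradiction].
  - rewrite Nat.add_0_r. apply Rmult_integral in Hev as [? | ?]; [assumption | contradiction].
Qed.

Lemma full_circles_lattice B :
  0 < a ->
  (forall m, In m l -> amp m <> 0) ->
  (forall m, In m l ->
     Zint (py m) /\ Rabs (px m) <= B /\ 0 <= py m /\ (py m = 0 -> 0 < px m)) ->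
  NoDup (map lattice_pt l) ->
  full n circles.
Proof.
  intros Ha Hamp Hm Hnd. apply (full_circles (/ (2 * B + 1))); auto.
  - intros m Hin. destruct (Hm m Hin) as (Hy & HB & Hy0 & Hpos).
    apply (slope_freq_pos B); auto.
  - replace (map (slope_freq _) l)
      with (map (fun p => / (2 * B + 1) * fst p + snd p) (map lattice_pt l))
      by (rewrite map_map; reflexivity).
    apply NoDup_map_NoDup_ForallPairs; auto.
    intros p p' Hp Hp' E.
    apply in_map_iff in Hp as (m & <- & Hin), Hp' as (m' & <- & Hin').
    destruct (Hm m Hin) as (Hy & HB & _), (Hm m' Hin') as (Hy' & HB' & _).
    unfold lattice_pt in *. destruct (slope_freq_inj B m m' Hy Hy' HB HB' E) as [-> ->].
    reflexivity.
Qed.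

Hypothesis energy : lsum (fun m => lam m * amp m ^ 2) l = 2.

Lemma tension_circles : tension n circles = circle_field (fun m => 2 - lam m) 0.
Proof.
  extensionality k; extensionality x; extensionality y. unfold tension.
  rewrite !dfield_circles, !cov_circle_field, Rplus_half_diag, cos_PI, !circle_field_PI.
  assert (Hsum : lsum (fun m => freq true m * freq true m * amp m ^ 2) l
               + lsum (fun m => freq false m * freq false m * amp m ^ 2) l = 2).
  { rewrite <- energy, <- lsum_plus. apply lsum_ext; intros; unfold lam; ring. }
  match type of Hsum with ?Sx + ?Sy = _ => replace Sy with (2 - Sx) by lra end.
  unfold circles, circle_field, lam. ring.
Qed.

Lemma bitension_circles k x y :
  bitension n circles k x y =
  ((2 - lam (mode_at k)) ^ 2 + lsum (fun m => (2 - lam m) * lam m * amp m ^ 2) l)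
  * circles k x y.
Proof.
  unfold bitension, Rsph; cbv zeta.
  rewrite tension_circles, !cov_circle_field0, !cov_circle_field, Rplus_half_diag, cos_PI,
    !circle_field_PI, !dfield_circles, !dot_circle_field, Rminus_0_l, cos_neg, cos_PI2,
    Rminus_diag, cos_0.
  assert (Hsum : lsum (fun m => freq true m * freq true m * amp m ^ 2) l
               + lsum (fun m => freq false m * freq false m * amp m ^ 2) l = 2).
  { rewrite <- energy, <- lsum_plus. apply lsum_ext; intros; unfold lam; ring. }
  match type of Hsum with ?Sx + ?Sy = _ => replace Sy with (2 - Sx) by lra end.
  assert (Hc : lsum (fun m => (2 - lam m) * freq true m * freq true m * amp m ^ 2) l
             + lsum (fun m => (2 - lam m) * freq false m * freq false m * amp m ^ 2) l
             = lsum (fun m => (2 - lam m) * lam m * amp m ^ 2) l).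
  { rewrite <- lsum_plus. apply lsum_ext; intros; unfold lam; ring. }
  rewrite <- Hc. unfold at_pt, circles, circle_field, lam. ring.
Qed.

Lemma biharmonic_circles mu :
  lsum (fun m => amp m ^ 2) l = 1 -> (forall m, In m l -> (2 - lam m) ^ 2 = mu) ->
  biharmonic n circles.
Proof.
  intros Hsph Hmu k x y Hk. rewrite bitension_circles.
  rewrite (lsum_ext _ (fun m => 4 * amp m ^ 2 + (-2 * (lam m * amp m ^ 2) + - mu * amp m ^ 2))).
  2: { intros m Hm. rewrite <- (Hmu m Hm). ring. }
  rewrite !lsum_plus, !lsum_scal, Hsph, energy, (Hmu _ (mode_at_In k Hk)). ring.
Qed.

Lemma not_harmonic_circles :
  (forall m, In m l -> amp m <> 0 /\ lam m <> 2) -> ~ harmonic n circles.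
Proof.
  intros Hm Hharm. specialize (Hharm 0%nat 0 0 ltac:(lia)).
  rewrite tension_circles in Hharm. unfold circle_field in Hharm. simpl Nat.odd in Hharm.
  rewrite !Rmult_0_r, !Rplus_0_r, Rminus_0_r, cos_0, Rmult_1_r in Hharm.
  destruct (Hm _ (mode_at_In 0 ltac:(lia))) as [Ha Hl].
  apply Rmult_integral in Hharm as [H | H]; [apply Hl | apply Ha]; lra.
Qed.

Lemma cmc_circles : cmc n circles.
Proof.
  eexists; intros x y. unfold mean_curv_norm.
  rewrite tension_circles, dot_circle_field. reflexivity.
Qed.

End Circles.

(** * Lattice points on a common circle *)

Definition pyth_x (r t : R) : R := r * (t ^ 2 - 1) / (t ^ 2 + 1).
Definition pyth_y (r t : R) : R := r * (2 * t) / (t ^ 2 + 1).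

Lemma pyth_norm r t : pyth_x r t ^ 2 + pyth_y r t ^ 2 = r ^ 2.
Proof. unfold pyth_x, pyth_y. field. pose proof (pow2_ge_0 t). lra. Qed.

Lemma pyth_pos r t : 0 < r -> 1 < t -> 0 < pyth_x r t /\ 0 < pyth_y r t.
Proof.
  intros Hr Ht. unfold pyth_x, pyth_y.
  split; apply Rdiv_lt_0_compat; try apply Rmult_lt_0_compat; nra.
Qed.

Lemma pyth_le r t : 0 < r -> 1 < t -> pyth_x r t <= r /\ pyth_y r t <= r.
Proof.
  intros Hr Ht. pose proof (pyth_norm r t). pose proof (pyth_pos r t Hr Ht). nra.
Qed.

Lemma pyth_y_inj r t t' : 0 < r -> 1 < t -> 1 < t' -> pyth_y r t = pyth_y r t' -> t = t'.
Proof.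
  intros Hr Ht Ht' E. unfold pyth_y in E.
  apply (Rmult_eq_compat_r ((t ^ 2 + 1) * (t' ^ 2 + 1))) in E.
  field_simplify in E; [|nra|nra].
  assert (H : 2 * r * ((t - t') * (t * t' - 1)) = 0) by nra.
  apply Rmult_integral in H as [H | H]; [lra|].
  apply Rmult_integral in H as [H | H]; nra.
Qed.

Lemma Zint_pyth q t :
  Zint q -> Zint t -> Zint (pyth_x (q * (t ^ 2 + 1)) t) /\ Zint (pyth_y (q * (t ^ 2 + 1)) t).
Proof.
  intros Hq Ht. assert (Ht2 : 0 < t ^ 2 + 1) by (pose proof (pow2_ge_0 t); lra).
  unfold pyth_x, pyth_y. split.
  - replace (q * (t ^ 2 + 1) * (t ^ 2 - 1) / (t ^ 2 + 1)) with (q * (t * t - 1)) by (field; lra).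
    apply Zint_mult; [exact Hq|]. apply Zint_minus; [apply Zint_mult; auto | now exists 1%Z].
  - replace (q * (t ^ 2 + 1) * (2 * t) / (t ^ 2 + 1)) with (q * (t + t)) by (field; lra).
    apply Zint_mult; [exact Hq | apply Zint_plus; auto].
Qed.

Definition tpar (i : nat) : R := INR i + 2.

(* A common multiple of the [tpar i ^ 2 + 1], [i < K], so that the points
   [pyth_x (radius K) (tpar i), pyth_y (radius K) (tpar i)] are integral. *)
Fixpoint radius (K : nat) : R :=
  match K with O => 1 | S K' => radius K' * (tpar K' ^ 2 + 1) end.

Lemma tpar_gt1 i : 1 < tpar i.
Proof. unfold tpar. pose proof (pos_INR i). lra. Qed.

Lemma Zint_tpar i : Zint (tpar i).
Proof. apply Zint_plus; [apply Zint_INR | now exists 2%Z]. Qed.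

Lemma Zint_tpar_sq_plus1 i : Zint (tpar i ^ 2 + 1).
Proof.
  apply Zint_plus; [| now exists 1%Z]. rewrite <- Rsqr_pow2. apply Zint_mult; apply Zint_tpar.
Qed.

Lemma radius_pos K : 0 < radius K.
Proof.
  induction K as [|K IH]; simpl; [lra|].
  apply Rmult_lt_0_compat; [exact IH | pose proof (pow2_ge_0 (tpar K)); lra].
Qed.

Lemma Zint_radius K : Zint (radius K).
Proof.
  induction K as [|K IH]; simpl; [now exists 1%Z|].
  apply Zint_mult; [exact IH | apply Zint_tpar_sq_plus1].
Qed.

Lemma radius_factor K i : (i < K)%nat -> exists q, Zint q /\ radius K = q * (tpar i ^ 2 + 1).
Proof.
  induction K as [|K IH]; intros Hi; [lia|]. simpl.
  destruct (Nat.eq_dec i K) as [-> | Hne].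
  - exists (radius K). split; [apply Zint_radius | reflexivity].
  - destruct (IH ltac:(lia)) as (q & Hq & ->). exists (q * (tpar K ^ 2 + 1)). split; [|ring].
    apply Zint_mult; [exact Hq | apply Zint_tpar_sq_plus1].
Qed.

(** * The family of modes *)

Section Family.

Variable N : nat.
Hypothesis N_pos : (1 <= N)%nat.

Definition rad : R := radius (Nat.div2 N).
Definition scale : R := sqrt 5 * rad / 2.
Definition odd_wt : R := INR (Nat.b2n (Nat.odd N)).
Definition wlow : R := / (2 * INR N).

Definition pyth_mode (i : nat) : mode :=
  Mode (sqrt wlow) (pyth_x rad (tpar i)) (pyth_y rad (tpar i)).
Definition pyth_mode_rot (i : nat) : mode :=
  Mode (sqrt wlow) (- pyth_y rad (tpar i)) (pyth_x rad (tpar i)).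
Definition axis_mode : mode := Mode (sqrt wlow) 0 rad.
Definition high_mode_x : mode := Mode (sqrt (1 / 4 + odd_wt * wlow / 8)) (2 * rad) 0.
Definition high_mode_y : mode := Mode (sqrt (1 / 4 - odd_wt * wlow / 8)) 0 (2 * rad).

(* [N] low modes ([lam = 4/5]) of squared amplitude [wlow] and two high modes
   ([lam = 16/5]).  When [N] is odd, the axis mode adds to the [y]-energy only;
   the [±wlow/8] in the high amplitudes restores the balance. *)
Definition modes : list mode :=
  high_mode_x :: high_mode_y :: (if Nat.odd N then [axis_mode] else [])
  ++ map pyth_mode (seq 0 (Nat.div2 N)) ++ map pyth_mode_rot (seq 0 (Nat.div2 N)).

Lemma INR_N_odd_div2 : INR N = odd_wt + 2 * INR (Nat.div2 N).
Proof.
  unfold odd_wt. rewrite (Nat.div2_odd N) at 1. rewrite plus_INR, mult_INR. simpl. ring.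
Qed.

Lemma length_modes : length modes = (N + 2)%nat.
Proof.
  unfold modes. simpl. rewrite !length_app, !length_map, length_seq.
  pose proof (Nat.div2_odd N). destruct (Nat.odd N); simpl in *; lia.
Qed.

Lemma lsum_modes g c :
  (forall i, g (pyth_mode i) + g (pyth_mode_rot i) = c) ->
  lsum g modes = g high_mode_x + g high_mode_y + odd_wt * g axis_mode + INR (Nat.div2 N) * c.
Proof.
  intros Hc. unfold modes, odd_wt.
  rewrite !lsum_cons, !lsum_app, !lsum_map, <- Rplus_assoc, <- lsum_plus.
  rewrite (lsum_ext (fun i => g (pyth_mode i) + g (pyth_mode_rot i)) (fun _ => c))
    by (intros; apply Hc). rewrite lsum_const, length_seq.
  destruct (Nat.odd N); simpl; ring.
Qed.

Lemma in_modes m :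
  In m modes ->
  m = high_mode_x \/ m = high_mode_y \/ m = axis_mode \/
  exists i, (i < Nat.div2 N)%nat /\ (m = pyth_mode i \/ m = pyth_mode_rot i).
Proof.
  unfold modes. intros [<- | [<- | Hm]]; auto.
  apply in_app_or in Hm as [Hm | Hm].
  - destruct (Nat.odd N); simpl in Hm; intuition.
  - apply in_app_or in Hm as [Hm | Hm]; apply in_map_iff in Hm as (i & <- & Hi);
      apply in_seq in Hi; right; right; right; exists i; split; auto; lia.
Qed.

Lemma rad_pos : 0 < rad.
Proof. apply radius_pos. Qed.

Lemma scale_pos : 0 < scale.
Proof.
  unfold scale. pose proof rad_pos. pose proof (sqrt_lt_R0 5 ltac:(lra)).
  apply Rdiv_lt_0_compat; [apply Rmult_lt_0_compat|]; lra.
Qed.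

Lemma scale_sq : scale ^ 2 = 5 / 4 * rad ^ 2.
Proof.
  unfold scale. replace ((sqrt 5 * rad / 2) ^ 2) with (sqrt 5 ^ 2 * rad ^ 2 / 4) by field.
  rewrite pow2_sqrt by lra. field.
Qed.

Lemma odd_wt_bounds : 0 <= odd_wt <= 1.
Proof. unfold odd_wt. destruct (Nat.odd N); simpl; lra. Qed.

Lemma INR_N_ge1 : 1 <= INR N.
Proof. apply (le_INR 1). exact N_pos. Qed.

Lemma wlow_eq : wlow = / (2 * (odd_wt + 2 * INR (Nat.div2 N))).
Proof. unfold wlow. now rewrite INR_N_odd_div2. Qed.

Lemma wlow_pos : 0 < wlow.
Proof. unfold wlow. pose proof INR_N_ge1. apply Rinv_0_lt_compat. lra. Qed.

Lemma high_weights_pos : 0 < 1 / 4 - odd_wt * wlow / 8 /\ 0 < 1 / 4 + odd_wt * wlow / 8.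
Proof.
  assert (wlow <= 1 / 2).
  { unfold wlow. pose proof INR_N_ge1. apply (Rmult_le_reg_l (2 * INR N)); [lra|].
    rewrite Rinv_r by lra. lra. }
  pose proof wlow_pos. pose proof odd_wt_bounds. split; nra.
Qed.

Lemma pyth_mode_bounds i :
  0 < pyth_x rad (tpar i) /\ 0 < pyth_y rad (tpar i) /\
  pyth_x rad (tpar i) <= rad /\ pyth_y rad (tpar i) <= rad.
Proof.
  pose proof (pyth_pos _ _ rad_pos (tpar_gt1 i)). pose proof (pyth_le _ _ rad_pos (tpar_gt1 i)).
  tauto.
Qed.

Lemma odd_div2_pos : 0 < odd_wt + 2 * INR (Nat.div2 N).
Proof. rewrite <- INR_N_odd_div2. pose proof INR_N_ge1. lra. Qed.

Ltac simpl_modes :=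
  unfold pyth_mode, pyth_mode_rot, high_mode_x, high_mode_y, axis_mode; cbn [amp px py];
  pose proof wlow_pos; pose proof high_weights_pos; rewrite ?pow2_sqrt by lra.

Lemma modes_sphere : lsum (fun m => amp m ^ 2) modes = 1.
Proof.
  rewrite (lsum_modes _ (2 * wlow)).
  - simpl_modes. rewrite wlow_eq. pose proof odd_div2_pos. field. lra.
  - intros i; simpl_modes; ring.
Qed.

Lemma modes_isometry :
  lsum (fun m => freq scale true m * freq scale true m * amp m ^ 2) modes = 1 /\
  lsum (fun m => freq scale false m * freq scale false m * amp m ^ 2) modes = 1 /\
  lsum (fun m => freq scale true m * freq scale false m * amp m ^ 2) modes = 0.
Proof.
  pose proof scale_pos. pose proof odd_div2_pos.
  rewrite !lsum_freq_mul by lra. cbn [lat].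
  rewrite (lsum_modes (fun m => px m * px m * amp m ^ 2) (rad ^ 2 * wlow)),
    (lsum_modes (fun m => py m * py m * amp m ^ 2) (rad ^ 2 * wlow)),
    (lsum_modes (fun m => px m * py m * amp m ^ 2) 0).
  2-4: intros i; simpl_modes; try rewrite <- (pyth_norm rad (tpar i)); ring.
  simpl_modes. rewrite scale_sq, wlow_eq. pose proof rad_pos. repeat split; field; lra.
Qed.

Lemma modes_energy : lsum (fun m => lam scale m * amp m ^ 2) modes = 2.
Proof.
  destruct modes_isometry as (Hxx & Hyy & _). rewrite lsum_lam_amp, Hxx, Hyy. ring.
Qed.

Lemma modes_lam m : In m modes -> (2 - lam scale m) ^ 2 = 36 / 25.
Proof.
  intros Hm. pose proof rad_pos. pose proof scale_pos.
  rewrite lam_lat, scale_sq by lra.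
  assert (E : px m ^ 2 + py m ^ 2 = rad ^ 2 \/ px m ^ 2 + py m ^ 2 = 4 * rad ^ 2).
  { apply in_modes in Hm as [-> | [-> | [-> | (i & _ & [-> | ->])]]]; simpl_modes;
      [right | right | left | left | left]; try ring;
      rewrite <- (pyth_norm rad (tpar i)); ring. }
  destruct E as [-> | ->]; field; lra.
Qed.

Lemma modes_amp_nonzero m : In m modes -> amp m <> 0.
Proof.
  intros Hm. apply Rgt_not_eq. pose proof wlow_pos. pose proof high_weights_pos.
  apply in_modes in Hm as [-> | [-> | [-> | (i & _ & [-> | ->])]]]; apply sqrt_lt_R0; lra.
Qed.

Lemma Zint_pyth_mode i :
  (i < Nat.div2 N)%nat -> Zint (pyth_x rad (tpar i)) /\ Zint (pyth_y rad (tpar i)).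
Proof.
  intros Hi. destruct (radius_factor _ _ Hi) as (q & Hq & E).
  unfold rad. rewrite E. exact (Zint_pyth q _ Hq (Zint_tpar i)).
Qed.

Lemma modes_lattice m :
  In m modes ->
  Zint (px m) /\ Zint (py m) /\ Rabs (px m) <= 2 * rad /\ 0 <= py m /\ (py m = 0 -> 0 < px m).
Proof.
  intros Hm. pose proof rad_pos. pose proof (Zint_radius (Nat.div2 N)) as Hr.
  assert (H0 : Zint 0) by now exists 0%Z.
  assert (H2r : Zint (2 * rad)) by (apply Zint_mult; [now exists 2%Z | exact Hr]).
  apply in_modes in Hm as [-> | [-> | [-> | (i & Hi & [-> | ->])]]]; simpl_modes.
  - rewrite Rabs_right by lra. repeat split; auto; lra.
  - rewrite Rabs_R0. repeat split; auto; lra.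
  - rewrite Rabs_R0. repeat split; auto; lra.
  - destruct (Zint_pyth_mode i Hi), (pyth_mode_bounds i) as (? & ? & ? & ?).
    rewrite Rabs_right by lra. repeat split; auto; lra.
  - destruct (Zint_pyth_mode i Hi), (pyth_mode_bounds i) as (? & ? & ? & ?).
    rewrite Rabs_Ropp, Rabs_right by lra.
    repeat split; auto using Zint_opp; lra.
Qed.

Lemma NoDup_lattice_pyth_modes s :
  NoDup s -> NoDup (map lattice_pt (map pyth_mode s ++ map pyth_mode_rot s)).
Proof.
  intros Hs. rewrite map_app, !map_map.
  assert (Hy_inj : forall i j, pyth_y rad (tpar i) = pyth_y rad (tpar j) -> i = j).
  { intros i j E. apply (pyth_y_inj _ _ _ rad_pos (tpar_gt1 i) (tpar_gt1 j)) in E.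
    unfold tpar in E. apply INR_eq. lra. }
  apply NoDup_app.
  - apply Injective_map_NoDup; [|exact Hs]. intros i j E. injection E as _ E. auto.
  - apply Injective_map_NoDup; [|exact Hs]. intros i j E. injection E as E _. apply Hy_inj. lra.
  - intros p Hp Hp'.
    apply in_map_iff in Hp as (i & <- & _), Hp' as (j & E & _). injection E as E _.
    pose proof (pyth_mode_bounds i). pose proof (pyth_mode_bounds j). simpl in E. lra.
Qed.

Lemma lattice_pyth_modes_bounds s p :
  In p (map lattice_pt (map pyth_mode s ++ map pyth_mode_rot s)) ->
  fst p <> 0 /\ 0 < snd p /\ snd p <= rad.
Proof.
  rewrite map_app, !map_map. intros Hp.
  apply in_app_or in Hp as [Hp | Hp]; apply in_map_iff in Hp as (i & <- & _);
    pose proof (pyth_mode_bounds i); simpl; lra.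
Qed.

Lemma NoDup_lattice_modes : NoDup (map lattice_pt modes).
Proof.
  pose proof rad_pos. set (s := seq 0 (Nat.div2 N)).
  pose proof (lattice_pyth_modes_bounds s) as Hpyth.
  unfold modes. fold s.
  rewrite map_cons, map_cons, (map_app lattice_pt (if Nat.odd N then [axis_mode] else [])).
  constructor; [|constructor].
  - intros [E | Hp]; [injection E; lra|]. apply in_app_or in Hp as [Hp | Hp].
    + destruct (Nat.odd N); simpl in Hp; [destruct Hp as [E | []]; injection E|]; lra.
    + apply Hpyth in Hp. simpl in Hp. lra.
  - intros Hp. apply in_app_or in Hp as [Hp | Hp].
    + destruct (Nat.odd N); simpl in Hp; [destruct Hp as [E | []]; injection E|]; lra.
    + apply Hpyth in Hp. simpl in Hp. lra.
  - apply NoDup_app; [| apply NoDup_lattice_pyth_modes, seq_NoDup |].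
    + destruct (Nat.odd N); repeat constructor; auto.
    + intros p Hp Hp'. apply Hpyth in Hp'.
      destruct (Nat.odd N); simpl in Hp; [destruct Hp as [<- | []]|]; simpl in Hp'; lra.
Qed.

End Family.

Theorem theorem3p11 :
  forall n : nat, (5 <= n)%nat -> Nat.Odd n ->
  exists a : R, 0 < a /\
  exists Phi : field,
    (forall k, (k <= n)%nat -> smooth2 (Phi k)) /\
    torus_periodic n a Phi /\
    into_unit_sphere n Phi /\
    isometric n Phi /\
    full n Phi /\
    biharmonic n Phi /\
    ~ harmonic n Phi /\
    cmc n Phi.
Proof.
  intros n Hn [k Hk].
  set (N := (k - 1)%nat).
  assert (HN : (1 <= N)%nat) by lia.
  assert (Hdim : S n = (2 * length (modes N))%nat) by (rewrite length_modes; lia).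
  pose proof (scale_pos N) as Ha.
  destruct (modes_isometry N HN) as (Hxx & Hyy & Hxy).
  pose proof (modes_energy N HN) as Henergy.
  exists (scale N); split; [exact Ha|].
  exists (circles (scale N) (modes N)).
  repeat match goal with |- _ /\ _ => split end.
  - intros j _. apply smooth2_circle_field.
  - apply torus_periodic_circles; [exact Hdim | lra |].
    intros m Hm. destruct (modes_lattice N HN m Hm) as (? & ? & _). auto.
  - apply into_unit_sphere_circles; [exact Hdim | apply modes_sphere, HN].
  - apply isometric_circles; assumption.
  - apply (full_circles_lattice _ _ _ Hdim (2 * rad N));
      [exact Ha | | | apply NoDup_lattice_modes].
    + apply modes_amp_nonzero, HN.
    + intros m Hm. destruct (modes_lattice N HN m Hm) as (? & ? & ?). auto.
  - apply (biharmonic_circles _ _ _ Hdim Henergy (36 / 25));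
      [apply modes_sphere, HN | apply modes_lam, HN].
  - apply not_harmonic_circles; [exact Hdim | exact Henergy |].
    intros m Hm. split; [apply (modes_amp_nonzero N HN m Hm) |].
    intros E. pose proof (modes_lam N HN m Hm) as L. rewrite E in L. lra.
  - apply cmc_circles; assumption.
Qed.
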